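(* (1) Let $1\le\ell_1\le\dots\le\ell_r\le n$ and $T=C_r\otimes\cdots\otimes C_1$ with $C_i\in B(\varpi_{\ell_i})$. Then $\psi_T=\prod_{i=1}^{r-1}\psi_{C_{i+1}\otimes C_i}$. (2) Let $1\le a\le b\le n$, $F\in B(\varpi_b)$, $E\in B(\varpi_a)$. Then: (a) if $F\otimes E$ is not semistandard then $\psi_{F\otimes E}=0$; (b) if $E=(1,\dots,a)$ and $F\otimes E$ is semistandard then $\psi_{F\otimes E}=1$; (c) if $F\otimes E$ is semistandard and $j\notin E$, $j+1\in E$, then $$\psi_{F\otimes E}=\begin{cases}t\,\psi_{s_jF\otimes s_jE}+(1-t)\,\psi_{F\otimes s_jE}, & \text{if } j\in F,\ j+1\notin F,\\ \psi_{s_jF\otimes s_jE}, &\text{otherwise.}\end{cases}$$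
   Context: Fix $n\ge1$, $[n]=\{1,\dots,n\}$, $\varpi_k=\varepsilon_1+\dots+\varepsilon_k\in\mathbb Z^n$. A column of length $\ell$ is $C=(c_1<\dots<c_\ell)\subseteq[n]$; $B(\varpi_\ell)$ is their set. $s_jC$ is the column whose underlying set is the image of $C$ under the transposition $(j,j+1)$. A tensor $T=C_r\otimes\cdots\otimes C_1$ ($C_i\in B(\varpi_{\ell_i})$, $\ell_1\le\dots\le\ell_r$) is the filling of the Young diagram of $\sum\varpi_{\ell_i}$ with columns $C_r,\dots,C_1$ from left to right (each top to bottom); it is semistandard if entries weakly increase along rows from left to right. Macdonald's $\psi$: for partitions $\mu\subseteq\lambda$ with $\theta=\lambda-\mu$ a horizontal strip ($\lambda_1\ge\mu_1\ge\lambda_2\ge\mu_2\ge\cdots$), let $\theta'_j$ be the number of boxes of $\theta$ in column $j$, $J=\{j\ge1:\theta'_j=0,\ \theta'_{j+1}=1\}$, $m_j(\mu)=\#\{i:\mu_i=j\}$, and $\psi_{\lambda/\mu}=\prod_{j\in J}(1-t^{m_j(\mu)})$. For a semistandard $T$ let $T_{\le i}$ be the shape (partition) formed by the boxes with entries $\le i$, and $\psi_T=\prod_{i=1}^{n-1}\psi_{T_{\le i+1}/T_{\le i}}\in\mathbb Z[t]$. For non-semistandard $T$ set $\psi_T=0$. *)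

From mathcomp Require Import all_boot all_order all_algebra.
Set Implicit Arguments. Unset Strict Implicit. Unset Printing Implicit Defensive.
Import GRing.Theory.
Local Open Scope ring_scope.

(* A column of length l in [n] = {1,..,n}: a strictly increasing sequence
   c_1 < ... < c_l of elements of [n]  (an element of B(varpi_l)). *)
Definition is_column (n l : nat) (C : seq nat) : bool :=
  [&& size C == l, sorted ltn C & all (fun c => (0 < c) && (c <= n)) C]%N.

Definition swapj (j c : nat) : nat :=
  if c == j then j.+1 else if c == j.+1 then j else c.

Definition sj (j : nat) (C : seq nat) : seq nat := sort leq (map (swapj j) C).

(* A tensor C_r (x) ... (x) C_1 is represented by the list of its columns
   from LEFT to RIGHT, i.e. [:: C_r; ...; C_1]; each column is read top to
   bottom, so the entry of row k (0-based) of column C is nth 0 C k. *)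

Definition semistandard (T : seq (seq nat)) : bool :=
  [forall p : 'I_(size T), forall q : 'I_(size T),
     (p < q)%N ==>
     [forall k : 'I_(size (nth [::] T q)),
        (k < size (nth [::] T p))%N ==>
        (nth 0 (nth [::] T p) k <= nth 0 (nth [::] T q) k)%N]].

(* T_{<= i}: the shape formed by the boxes with entries <= i, given by its
   row lengths (row k = number of boxes of row k with entry <= i). *)
Definition shape_le (T : seq (seq nat)) (i : nat) : seq nat :=
  [seq count (fun C => (k < size C) && (nth 0 C k <= i))%N T
  | k <- iota 0 (foldr maxn 0 (map size T))].

(* Partitions are given by their row lengths (trailing zeros allowed). *)
Definition conjp (lam : seq nat) (j : nat) : nat := count (fun x => j <= x)%N lam.
Definition mult (mu : seq nat) (j : nat) : nat := count (pred1 j) mu.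
Definition thetap (lam mu : seq nat) (j : nat) : nat := (conjp lam j - conjp mu j)%N.

(* Macdonald's psi_{lambda/mu} = prod_{j in J} (1 - t^{m_j(mu)}) in Z[t],
   J = { j >= 1 : theta'_j = 0, theta'_{j+1} = 1 }.  Any j in J satisfies
   j + 1 <= lambda_1 <= sumn lambda, so ranging over 1 <= j <= sumn lambda
   covers all of J. *)
Definition psi_skew (lam mu : seq nat) : {poly int} :=
  \prod_(j <- iota 1 (sumn lam) |
          (thetap lam mu j == 0%N) && (thetap lam mu j.+1 == 1%N))
     (1 - 'X ^+ mult mu j).

Definition psiT (n : nat) (T : seq (seq nat)) : {poly int} :=
  if semistandard T then
    \prod_(1 <= i < n) psi_skew (shape_le T i.+1) (shape_le T i)
  else 0.

From mathcomp Require Import all_boot all_order all_algebra.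
From mathcomp Require Import zify ring.
Import GRing.Theory.

Set Implicit Arguments. Unset Strict Implicit. Unset Printing Implicit Defensive.

(** In a semistandard filling [T] whose columns have weakly decreasing lengths,
    the [j]-th column of the partition [T_{<=i}] has as many boxes as the [j]-th
    column of [T] has entries [<= i].  Hence [theta'_j], [theta'_{j+1}] and
    [m_j(mu)] in [psi_{T_{<=i+1}/T_{<=i}}] are read off the columns [j] and [j+1]
    of [T], and [psi_T] is a double product, over [i] and over adjacent pairs of
    columns, of a factor [psi_factor i C D]; exchanging the two products gives
    (1), semistandardness being itself a condition on adjacent pairs.  For a pair
    of columns, [s_j] only changes the number of entries [<= j], so only the
    factors at [i = j-1] and [i = j] change, and (2c) follows by comparing them
    according to whether [j] and [j+1] lie in [F]. *)

Definition cnt_le (C : seq nat) (i : nat) : nat := count (fun x => x <= i)%N C.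

Lemma cnt_leS C i : cnt_le C i.+1 = (cnt_le C i + count_mem i.+1 C)%N.
Proof.
rewrite /cnt_le; elim: C => //= x C ->.
have : ((x <= i.+1) = (x <= i) + (x == i.+1) :> nat)%N by case: ltngtP; lia.
lia.
Qed.

Lemma ltn_cnt_le_sorted s i k : sorted leq s ->
  (k < cnt_le s i)%N = (k < size s)%N && (nth 0 s k <= i)%N.
Proof.
elim: s k => [|x s IH] k //= s_sorted.
have x_min := order_path_min leq_trans s_sorted.
rewrite /cnt_le /= -/(cnt_le s i).
case: (leqP x i) => xi.
  by case: k => [|k] //=; rewrite add1n !ltnS IH // (path_sorted s_sorted).
have -> : cnt_le s i = 0.
  apply/eqP; rewrite -leqn0 leqNgt -has_count; apply/hasPn => y ys /=.
  by rewrite -ltnNge (leq_trans xi) //; apply: (allP x_min).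
case: k => [|k]; rewrite addn0 /=; first by rewrite [RHS]leqNgt xi.
apply/esym/negbTE/negP => /andP[ks le].
by move: (leq_trans (allP x_min _ (mem_nth 0 ks)) le); rewrite leqNgt xi.
Qed.

Lemma cnt_le_iota a m : cnt_le (iota 1 a) m = minn m a.
Proof.
elim: a => [|a IH]; first by rewrite minn0.
by rewrite -[a.+1]addn1 iotaD /cnt_le count_cat -/(cnt_le _ _) IH /=; lia.
Qed.

Lemma cnt_le_uniq_pos C i : uniq C -> all (leq 1) C -> (cnt_le C i <= i)%N.
Proof.
move=> C_uniq /allP C_pos; rewrite /cnt_le -size_filter -[X in (_ <= X)%N](size_iota 1).
apply: uniq_leq_size; first exact: filter_uniq.
by move=> x; rewrite mem_filter mem_iota => /andP[/= xi /C_pos]; lia.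
Qed.

Lemma swapjK j : involutive (swapj j).
Proof. by move=> c; rewrite /swapj; repeat case: eqP; lia. Qed.

Lemma mem_sj j C x : (x \in sj j C) = (swapj j x \in C).
Proof. by rewrite mem_sort -{1}[x](swapjK j) (mem_map (can_inj (swapjK j))). Qed.

Lemma cnt_le_sj j C i : cnt_le (sj j C) i = count (fun c => swapj j c <= i)%N C.
Proof. by rewrite /cnt_le /sj (permP (permEl (perm_sort leq _))) count_map. Qed.

Lemma cnt_le_sj_neq j C i : i != j -> cnt_le (sj j C) i = cnt_le C i.
Proof.
move=> ij; rewrite cnt_le_sj; apply: eq_count => c /=.
by rewrite /swapj; move: ij; repeat case: eqP; lia.
Qed.

Lemma cnt_le_sj_j j C : (0 < j)%N ->
  cnt_le (sj j C) j = (cnt_le C j.-1 + count_mem j.+1 C)%N.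
Proof.
move=> j_gt0; rewrite cnt_le_sj /cnt_le; elim: C => //= c C ->.
have : ((swapj j c <= j) = (c <= j.-1) + (c == j.+1) :> nat)%N.
  by rewrite /swapj; repeat case: eqP; lia.
lia.
Qed.

Section Columns.

Variables (n l : nat) (C : seq nat).
Hypothesis C_col : is_column n l C.

Lemma column_size : size C = l.
Proof. by case/and3P: C_col => /eqP. Qed.

Lemma column_sorted : sorted leq C.
Proof. by case/and3P: C_col => _; rewrite ltn_sorted_uniq_leq => /andP[]. Qed.

Lemma column_uniq : uniq C.
Proof. by case/and3P: C_col => _; rewrite ltn_sorted_uniq_leq => /andP[]. Qed.

Lemma column_pos : all (leq 1) C.
Proof. by case/and3P: C_col => _ _; apply: sub_all => x /andP[]. Qed.

Lemma cnt_le_column0 : cnt_le C 0 = 0.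
Proof.
apply/eqP; rewrite -leqn0 leqNgt -has_count; apply/hasPn => x xC /=.
by rewrite -ltnNge; apply: (allP column_pos).
Qed.

Lemma is_column_sj j : (0 < j < n)%N -> is_column n l (sj j C).
Proof.
move=> jn; case/and3P: C_col => /eqP C_size _ /allP C_range.
rewrite /is_column /sj size_sort size_map C_size eqxx ltn_sorted_uniq_leq /=.
rewrite sort_uniq (map_inj_uniq (can_inj (swapjK j))) column_uniq.
rewrite (sort_sorted leq_total) all_sort all_map /=; apply/allP => x /C_range /=.
by rewrite /swapj; repeat case: eqP; lia.
Qed.

End Columns.

Lemma semistandardP T :
  reflect (forall p q k, (p < q)%N -> (q < size T)%N ->
             (k < size (nth [::] T q))%N -> (k < size (nth [::] T p))%N ->
             (nth 0 (nth [::] T p) k <= nth 0 (nth [::] T q) k)%N)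
          (semistandard T).
Proof.
apply: (iffP forallP) => [T_ss p q k pq qT kq kp | T_ss p].
  have pT : (p < size T)%N by apply: ltn_trans qT.
  move: (T_ss (Ordinal pT)) => /forallP /(_ (Ordinal qT)) /implyP /(_ pq).
  by move=> /forallP /(_ (Ordinal kq)) /implyP /(_ kp).
apply/forallP => q; apply/implyP => pq; apply/forallP => k.
by apply/implyP => kp; apply: T_ss.
Qed.

Lemma semistandard2P C D : sorted leq C -> sorted leq D -> (size D <= size C)%N ->
  reflect (forall i, cnt_le D i <= cnt_le C i)%N (semistandard [:: C; D]).
Proof.
move=> C_sorted D_sorted DC; apply: (iffP (semistandardP _)) => [CD i | CD].
  case Di: (cnt_le D i) => [|k] //.
  have : (k < cnt_le D i)%N by rewrite Di.
  rewrite ltn_cnt_le_sorted // => /andP[kD Dk].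
  have kC : (k < size C)%N by apply: leq_trans DC.
  rewrite ltn_cnt_le_sorted // kC; exact: leq_trans (CD 0 1 k isT isT kD kC) Dk.
move=> [|p] [|[|q]] k //= _ _ kD kC.
have : (k < cnt_le D (nth 0 D k))%N by rewrite ltn_cnt_le_sorted // kD leqnn.
by move/leq_trans/(_ (CD _)); rewrite ltn_cnt_le_sorted // => /andP[].
Qed.

Definition sizes_noninc (T : seq (seq nat)) : Prop :=
  forall p q, (p <= q)%N -> (q < size T)%N ->
    (size (nth [::] T q) <= size (nth [::] T p))%N.

Lemma sizes_noninc2 C D : (size D <= size C)%N -> sizes_noninc [:: C; D].
Proof. by move=> DC [|[|p]] [|[|q]]. Qed.

Lemma semistandard_adjacent T p : semistandard T -> (p.+1 < size T)%N ->
  semistandard [:: nth [::] T p; nth [::] T p.+1].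
Proof.
move/semistandardP => T_ss pT; apply/semistandardP.
by move=> [|p'] [|[|q']] k //= _ _; apply: T_ss.
Qed.

Lemma adjacent_semistandard T : sizes_noninc T ->
  (forall p, (p.+1 < size T)%N -> semistandard [:: nth [::] T p; nth [::] T p.+1]) ->
  semistandard T.
Proof.
move=> T_sizes T_adj; apply/semistandardP => p q k pq qT kq kp.
elim: q pq qT kq => // q IH pq qT kq.
have kq' : (k < size (nth [::] T q))%N by apply: leq_trans kq (T_sizes _ _ _ qT).
have step : (nth 0 (nth [::] T q) k <= nth 0 (nth [::] T q.+1) k)%N.
  by move/semistandardP: (T_adj q qT) => /(_ 0 1 k isT isT kq kq').
move: pq; rewrite ltnS leq_eqVlt => /orP[/eqP -> // | pq].
exact: leq_trans (IH pq (ltnW qT) kq') step.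
Qed.

Lemma ltn_count_downclosed (A : Type) (x0 : A) (P : pred A) (s : seq A) j :
  ~~ P x0 ->
  (forall p q, (p <= q)%N -> (q < size s)%N -> P (nth x0 s q) -> P (nth x0 s p)) ->
  (j < count P s)%N = P (nth x0 s j).
Proof.
move=> nP0; elim: s j => [|x s IH] j P_down; first by rewrite nth_nil (negbTE nP0).
have s_down p q : (p <= q)%N -> (q < size s)%N ->
    P (nth x0 s q) -> P (nth x0 s p) by move=> *; apply: (P_down p.+1 q.+1).
case Px: (P x) => /=.
  by case: j => [|j] /=; rewrite ?Px // add1n ltnS IH.
have P_none k : P (nth x0 (x :: s) k) = false.
  apply/negbTE/negP => Pk; case: (ltnP k (size (x :: s))) => ks.
    by move: (P_down 0 k isT ks Pk); rewrite /= Px.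
  by move: Pk; rewrite nth_default // (negbTE nP0).
have -> : count P s = 0.
  apply/eqP; rewrite -leqn0 leqNgt -has_count; apply/(has_nthP x0) => -[k _ Pk].
  by move: (P_none k.+1); rewrite /= Pk.
by rewrite Px P_none.
Qed.

Lemma size_nth_leq_max (T : seq (seq nat)) j :
  (size (nth [::] T j) <= foldr maxn 0 (map size T))%N.
Proof.
elim: T j => [|x T IH] [|j] //=; first exact: leq_maxl.
exact: leq_trans (IH j) (leq_maxr _ _).
Qed.

Lemma conjp_shape_le T i j : sizes_noninc T -> semistandard T ->
  conjp (shape_le T i) j.+1 = cnt_le (nth [::] T j) i.
Proof.
move=> T_sizes /semistandardP T_ss; rewrite /conjp /shape_le count_map.
set Tj := nth [::] T j; set M := foldr maxn 0 _.
pose boxP k := (k < size Tj) && (nth 0 Tj k <= i).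
transitivity (count boxP (iota 0 M)).
  apply: eq_count => k /=; rewrite (ltn_count_downclosed (x0 := [::])) //.
  move=> p q; rewrite leq_eqVlt => /orP[/eqP -> // | pq] qT /andP[kq le].
  have kp : (k < size (nth [::] T p))%N.
    exact: leq_trans kq (T_sizes _ _ (ltnW pq) qT).
  by rewrite kp (leq_trans (T_ss _ _ _ pq qT kq kp) le).
have TjM : (size Tj <= M)%N by apply: size_nth_leq_max.
rewrite -(subnKC TjM) iotaD count_cat.
rewrite [X in (_ + X)%N](eq_in_count (a2 := pred0)) ?count_pred0 ?addn0; last first.
  by move=> k; rewrite mem_iota /boxP => /andP[+ _]; rewrite add0n leqNgt => /negbTE ->.
rewrite (eq_in_count (a2 := fun k => nth 0 Tj k <= i)%N); last first.
  by move=> k; rewrite mem_iota /boxP => /andP[_ ->].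
by rewrite -(count_map (nth 0 Tj) (fun x => x <= i)%N) -/(mkseq _ _) mkseq_nth.
Qed.

Lemma conjp_mult mu j : conjp mu j = (mult mu j + conjp mu j.+1)%N.
Proof.
rewrite /conjp /mult; elim: mu => //= x mu ->.
have : ((j <= x) = (x == j) + (j < x) :> nat)%N by case: ltngtP.
lia.
Qed.

Lemma conjp_gt0_leq_sumn mu k : (0 < conjp mu k)%N -> (k <= sumn mu)%N.
Proof.
rewrite /conjp -has_count => /hasP[x xmu /= kx].
elim: mu xmu => //= y mu IH; rewrite in_cons => /orP[/eqP <- | /IH].
  exact: leq_trans kx (leq_addr _ _).
by move/leq_trans; apply; apply: leq_addl.
Qed.

Lemma big_iota1_trunc (R : Type) (idx : R) (op : Monoid.law idx) (h : nat -> R) K M :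
  (K <= M)%N -> (forall j, (K < j)%N -> h j = idx) ->
  \big[op/idx]_(j <- iota 1 M) h j = \big[op/idx]_(j <- iota 1 K) h j.
Proof.
move=> KM h_idx; rewrite -(subnKC KM) iotaD big_cat /=.
rewrite [X in op _ X]big1_seq ?Monoid.mulm1 // => j /andP[_].
by rewrite mem_iota => /andP[Kj _]; apply: h_idx; lia.
Qed.

Local Open Scope ring_scope.

Definition psi_factor (i : nat) (C D : seq nat) : {poly int} :=
  if (cnt_le C i.+1 - cnt_le C i == 0)%N && (cnt_le D i.+1 - cnt_le D i == 1)%N
  then 1 - 'X ^+ (cnt_le C i - cnt_le D i) else 1.

Lemma psi_skew_shape_le T i : sizes_noninc T -> semistandard T ->
  psi_skew (shape_le T i.+1) (shape_le T i) =
  \prod_(1 <= j < size T) psi_factor i (nth [::] T j.-1) (nth [::] T j).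
Proof.
move=> T_sizes T_ss; rewrite /psi_skew big_mkcond /=.
pose h j := psi_factor i (nth [::] T j.-1) (nth [::] T j).
rewrite (eq_big_seq h); last first.
  move=> [|j]; rewrite mem_iota // => _.
  rewrite /h /psi_factor /thetap /mult /= !conjp_shape_le //.
  have := conjp_mult (shape_le T i) j.+1.
  by rewrite /mult !conjp_shape_le // => ->; rewrite addnK.
set S := sumn _.
have h_sumn j : (S < j)%N -> h j = 1.
  rewrite /h /psi_factor; case: ifP => // /andP[_ /eqP col_j] Sj.
  have : (0 < conjp (shape_le T i.+1) j.+1)%N by rewrite conjp_shape_le //; lia.
  by move/conjp_gt0_leq_sumn; rewrite -/S; lia.
have h_size j : (size T - 1 < j)%N -> h j = 1.
  move=> Tj; rewrite /h /psi_factor (nth_default [::] (_ : size T <= j)%N) ?andbF //; lia.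
have h_min j : (minn S (size T - 1) < j)%N -> h j = 1.
  by rewrite gtn_min => /orP[/h_sumn | /h_size].
rewrite (big_iota1_trunc _ (geq_minl S (size T - 1)) h_min).
by rewrite /index_iota (big_iota1_trunc _ (geq_minr S (size T - 1)) h_min).
Qed.

Lemma psiT_prod n T : sizes_noninc T -> semistandard T ->
  psiT n T = \prod_(1 <= i < n) \prod_(1 <= j < size T)
                psi_factor i (nth [::] T j.-1) (nth [::] T j).
Proof.
by move=> T_sizes T_ss; rewrite /psiT T_ss; apply: eq_bigr => i _; apply: psi_skew_shape_le.
Qed.

Lemma psiT_non_semistandard n T : ~~ semistandard T -> psiT n T = 0.
Proof. by rewrite /psiT => /negbTE ->. Qed.

Lemma eq_psi_factor i C D C' D' :
  cnt_le C' i = cnt_le C i -> cnt_le C' i.+1 = cnt_le C i.+1 ->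
  cnt_le D' i = cnt_le D i -> cnt_le D' i.+1 = cnt_le D i.+1 ->
  psi_factor i C' D' = psi_factor i C D.
Proof. by rewrite /psi_factor => -> -> -> ->. Qed.

Lemma psi_factor_uniq i C D : uniq C -> uniq D ->
  psi_factor i C D = if (i.+1 \notin C) && (i.+1 \in D)
                     then 1 - 'X ^+ (cnt_le C i - cnt_le D i) else 1.
Proof.
move=> C_uniq D_uniq; rewrite /psi_factor !cnt_leS !addKn !count_uniq_mem //.
by case: (i.+1 \in C); case: (i.+1 \in D).
Qed.

Lemma psiT2_prod n a b C D : (0 < n)%N -> (a <= b)%N ->
  is_column n b C -> is_column n a D -> semistandard [:: C; D] ->
  psiT n [:: C; D] = \prod_(0%N <= i < n) psi_factor i C D.
Proof.
move=> n_gt0 ab C_col D_col CD.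
have DC : (size D <= size C)%N by rewrite (column_size C_col) (column_size D_col).
have psi_factor0 : psi_factor 0 C D = 1.
  rewrite /psi_factor (cnt_le_column0 C_col) (cnt_le_column0 D_col) !subn0.
  case: ifP => // /andP[/eqP C1 /eqP D1].
  move/semistandard2P: CD => /(_ (column_sorted C_col) (column_sorted D_col) DC 1%N).
  by rewrite C1 D1.
rewrite (psiT_prod _ (sizes_noninc2 DC) CD) [RHS]big_ltn // psi_factor0 mul1r.
by apply: eq_bigr => i _; rewrite big_nat1.
Qed.

Lemma psiT_tensor n r (C : nat -> seq nat) : (0 < r)%N ->
  (forall i, (1 <= i < r)%N -> (size (C i) <= size (C i.+1))%N) ->
  psiT n [seq C (r - k)%N | k <- iota 0 r] = \prod_(1 <= i < r) psiT n [:: C i.+1; C i].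
Proof.
move=> r_gt0 C_sizes; set T := [seq _ | k <- _].
have T_size : size T = r by rewrite size_map size_iota.
have nth_T p : (p < r)%N -> nth [::] T p = C (r - p)%N.
  by move=> pr; rewrite (nth_map 0) ?size_iota // nth_iota.
have size_mono a b : (1 <= a)%N -> (a <= b <= r)%N -> (size (C a) <= size (C b))%N.
  move=> a_gt0; elim: b => [|b IH] /andP[ab br]; first by lia.
  move: ab; rewrite leq_eqVlt => /orP[/eqP -> // | /ltnSE ab].
  by apply: leq_trans (IH _) (C_sizes _ _); lia.
have T_sizes : sizes_noninc T.
  by move=> p q pq; rewrite T_size => qr; rewrite !nth_T ?size_mono //; lia.
have T_pair i : (1 <= i < r)%N ->
    [:: C i.+1; C i] = [:: nth [::] T (r - i.+1); nth [::] T (r - i.+1).+1].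
  by move=> ir; rewrite !nth_T; try lia; congr [:: C _; C _]; lia.
have pair_sizes i : (1 <= i < r)%N -> sizes_noninc [:: C i.+1; C i].
  by move=> ir; apply/sizes_noninc2/C_sizes.
case T_ss: (semistandard T); last first.
  rewrite psiT_non_semistandard ?T_ss //; apply/esym/eqP.
  rewrite prodf_seq_eq0; apply: contraFT T_ss => /hasPn pairs_ss.
  apply: adjacent_semistandard => // p; rewrite T_size => pr.
  have /pairs_ss : (r - p.+1)%N \in index_iota 1 r by rewrite mem_index_iota; lia.
  rewrite T_pair /=; last by lia.
  have -> : (r - (r - p.+1).+1 = p)%N by lia.
  by apply: contraNT => /psiT_non_semistandard ->.
rewrite psiT_prod // T_size exchange_big big_nat_rev; apply: eq_big_nat => i ir.
rewrite (psiT_prod _ (pair_sizes _ ir)); last first.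
  by rewrite T_pair //; apply: semistandard_adjacent; lia.
apply: eq_bigr => k _; rewrite big_nat1 /= !nth_T; try lia.
by congr (psi_factor _ (C _) (C _)); lia.
Qed.

Lemma psiT2_initial_column n a b F : (0 < n)%N -> (a <= b)%N -> (b <= n)%N ->
  is_column n b F -> semistandard [:: F; iota 1 a] -> psiT n [:: F; iota 1 a] = 1.
Proof.
move=> n_gt0 ab bn F_col FE.
have E_col : is_column n a (iota 1 a).
  rewrite /is_column size_iota eqxx iota_ltn_sorted /=.
  by apply/allP => x; rewrite mem_iota; lia.
have F_uniq := column_uniq F_col.
rewrite (psiT2_prod n_gt0 ab F_col E_col FE); apply: big1 => i _.
rewrite psi_factor_uniq ?iota_uniq //; case: ifP => // /andP[iF].
rewrite mem_iota => ia.
move/semistandard2P: FE => /(_ (column_sorted F_col) (column_sorted E_col)).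
rewrite (column_size F_col) size_iota => /(_ ab i.+1).
rewrite cnt_le_iota cnt_leS count_uniq_mem // (negbTE iF) addn0.
by have := cnt_le_uniq_pos i F_uniq (column_pos F_col); lia.
Qed.

Lemma prod_nat_split_pair (R : comNzRingType) (f : nat -> R) n j : (0 < j < n)%N ->
  \prod_(0%N <= i < n) f i =
    (\prod_(0%N <= i < j.-1) f i * \prod_(j.+1 <= i < n) f i) * (f j.-1 * f j).
Proof.
case/andP=> j_gt0 jn.
rewrite (big_cat_nat (n := j.-1)) //=; last by lia.
rewrite (big_ltn (_ : j.-1 < n)%N); last by lia.
by rewrite prednK // (big_ltn jn); ring.
Qed.

Lemma mem_sj_j j C : (j \in sj j C) = (j.+1 \in C).
Proof. by rewrite mem_sj /swapj eqxx. Qed.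

Lemma mem_sj_jS j C : (j.+1 \in sj j C) = (j \in C).
Proof. by rewrite mem_sj /swapj (gtn_eqF (ltnSn j)) eqxx. Qed.

Section Exchange.

Variables (n j a b : nat) (F E : seq nat).
Hypotheses (j_range : (0 < j < n)%N) (ab : (a <= b)%N)
  (F_col : is_column n b F) (E_col : is_column n a E) (FE : semistandard [:: F; E]).

Let rest := \prod_(0%N <= i < j.-1) psi_factor i F E * \prod_(j.+1 <= i < n) psi_factor i F E.

Lemma semistandard2_cnt_le k : (cnt_le E k <= cnt_le F k)%N.
Proof.
have EF : (size E <= size F)%N by rewrite (column_size F_col) (column_size E_col).
by move/(semistandard2P (column_sorted F_col) (column_sorted E_col) EF): FE.
Qed.

Lemma psiT2_off_j C D : is_column n b C -> is_column n a D ->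
  (forall k, k != j -> cnt_le C k = cnt_le F k) ->
  (forall k, k != j -> cnt_le D k = cnt_le E k) ->
  psiT n [:: C; D] =
    if (cnt_le D j <= cnt_le C j)%N
    then rest * (psi_factor j.-1 C D * psi_factor j C D) else 0.
Proof.
move=> C_col D_col CF DE.
have DC : (size D <= size C)%N by rewrite (column_size C_col) (column_size D_col).
have CD_ss : semistandard [:: C; D] = (cnt_le D j <= cnt_le C j)%N.
  apply/(semistandard2P (column_sorted C_col) (column_sorted D_col) DC)/idP.
    by move=> CD; apply: CD.
  move=> Dj k; case: (eqVneq k j) => [-> // | kj].
  by rewrite CF ?DE //; apply: semistandard2_cnt_le.
case: ifP => Dj; last by rewrite psiT_non_semistandard ?CD_ss ?Dj.
have n_gt0 : (0 < n)%N by lia.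
rewrite (psiT2_prod n_gt0 ab C_col D_col) ?CD_ss // (prod_nat_split_pair _ j_range).
by congr (_ * _ * _); apply: eq_big_nat => i i_range;
  apply: eq_psi_factor; rewrite ?CF ?DE //; lia.
Qed.

Lemma psiT2_exchange : j \notin E -> j.+1 \in E ->
  psiT n [:: F; E] =
    if (j \in F) && (j.+1 \notin F) then
      'X * psiT n [:: sj j F; sj j E] + (1 - 'X) * psiT n [:: F; sj j E]
    else psiT n [:: sj j F; sj j E].
Proof.
move=> jE j1E.
have sjF_col := is_column_sj F_col j_range.
have sjE_col := is_column_sj E_col j_range.
have j_gt0 : (0 < j)%N by lia.
have [F_uniq E_uniq] := (column_uniq F_col, column_uniq E_col).
have [sjF_uniq sjE_uniq] := (column_uniq sjF_col, column_uniq sjE_col).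
have sj_off C k : k != j -> cnt_le (sj j C) k = cnt_le C k by apply: cnt_le_sj_neq.
have cnt_j C : uniq C -> cnt_le C j = (cnt_le C j.-1 + (j \in C))%N.
  by move=> C_uniq; rewrite -{1}(prednK j_gt0) cnt_leS prednK // count_uniq_mem.
have cnt_sj_j C : uniq C -> cnt_le (sj j C) j = (cnt_le C j.-1 + (j.+1 \in C))%N.
  by move=> C_uniq; rewrite cnt_le_sj_j // count_uniq_mem.
have cnt_sj_pred C : cnt_le (sj j C) j.-1 = cnt_le C j.-1 by apply: sj_off; lia.
have E_le_F_pred := semistandard2_cnt_le j.-1.
have := semistandard2_cnt_le j.+1.
rewrite (psiT2_off_j sjF_col sjE_col (sj_off F) (sj_off E)).
rewrite (psiT2_off_j F_col sjE_col _ (sj_off E)) // psiT2_off_j //.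
rewrite !psi_factor_uniq // prednK // !mem_sj_j !mem_sj_jS (negbTE jE) j1E.
rewrite !cnt_sj_j // !cnt_sj_pred !cnt_leS !count_uniq_mem // !(cnt_j F) // !(cnt_j E) //.
rewrite (negbTE jE) j1E.
move: E_le_F_pred; set x := cnt_le F j.-1; set y := cnt_le E j.-1.
case: (j \in F); case: (j.+1 \in F) => /= y_le_x y_le_x_j1;
  rewrite ?andbF ?andbT /= ?addn0 ?addn1 ?mulr1 ?mul1r.
1,3,4: by rewrite !ifT //; lia.
rewrite ltnS (leqW y_le_x) y_le_x; case: (ltnP y x) => [y_lt_x | x_le_y].
  by rewrite subSn // exprS; ring.
have -> : (x.+1 - y = 1)%N by lia.
by rewrite mulr0 add0r expr1; ring.
Qed.

End Exchange.

Theorem proposition4p1 (n : nat) (hn : (1 <= n)%N) :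
  (* (1) *)
  (forall (r : nat) (l : nat -> nat) (C : nat -> seq nat),
     (0 < r)%N -> (1 <= l 1)%N ->
     (forall i, (1 <= i < r)%N -> (l i <= l i.+1)%N) ->
     (l r <= n)%N ->
     (forall i, (1 <= i <= r)%N -> is_column n (l i) (C i)) ->
     psiT n [seq C (r - k)%N | k <- iota 0 r]
       = \prod_(1 <= i < r) psiT n [:: C i.+1; C i])
  /\
  (* (2) *)
  (forall (a b : nat) (F E : seq nat),
     (1 <= a)%N -> (a <= b)%N -> (b <= n)%N ->
     is_column n b F -> is_column n a E ->
     (* (a) *)
     (~~ semistandard [:: F; E] -> psiT n [:: F; E] = 0)
     /\
     (* (b) *)
     (E = iota 1 a -> semistandard [:: F; E] -> psiT n [:: F; E] = 1)
     /\
     (* (c) *)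
     (forall j : nat, (0 < j < n)%N ->
        semistandard [:: F; E] -> j \notin E -> j.+1 \in E ->
        psiT n [:: F; E] =
          if (j \in F) && (j.+1 \notin F) then
            'X * psiT n [:: sj j F; sj j E] + (1 - 'X) * psiT n [:: F; sj j E]
          else psiT n [:: sj j F; sj j E])).
Proof.
split.
  move=> r l C r_gt0 _ l_mono _ C_col; apply: psiT_tensor => // i i_range.
  by rewrite (column_size (C_col i _)) ?(column_size (C_col i.+1 _)) ?l_mono //; lia.
move=> a b F E _ ab bn F_col E_col.
split; first exact: psiT_non_semistandard.
split=> [-> | j j_range FE jE j1E]; first exact: (psiT2_initial_column hn ab bn F_col).
exact: (psiT2_exchange j_range ab).
Qed.
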